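(* Let $\alpha_0,\dots,\alpha_{L-1}$ be i.i.d. uniform on $(-\tfrac12,\tfrac12)$, extended $L$-periodically; let $\omega_i=\Delta\alpha_i-[\![\Delta\alpha_i]\!]$, $S=\sum_{i=0}^{L-1}[\![\Delta\alpha_i]\!]$, and let $\sigma$ be the permutation of $\{0,\dots,L-1\}$ with $\omega_{\sigma(0)}<\dots<\omega_{\sigma(L-1)}$. Define $J'_i=-\mathbf 1(i\in\sigma\{L-|S|,\dots,L-1\})$ if $S<0$, $J'_i=0$ if $S=0$, and $J'_i=\mathbf 1(i\in\sigma\{0,\dots,S-1\})$ if $S>0$, and let $$d\equiv\sum_{i=0}^{L-1}i\left([\![\Delta\alpha_i]\!]-J'_i\right)\pmod L,\qquad d\in\{0,\dots,L-1\}.$$ Then $d$ is uniformly distributed on $\{0,\dots,L-1\}$ and independent of $\vec\omega=(\omega_0,\dots,\omega_{L-1})$.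
   Context: $\Delta$ is the periodic discrete Laplacian, $\Delta\alpha_i=\alpha_{i-1}-2\alpha_i+\alpha_{i+1}$ with indices mod $L$; $[\![x]\!]$ is the integer nearest to $x$; $\sigma\{a,\dots,b\}$ denotes the image of the index set $\{a,\dots,b\}$ under $\sigma$; $\mathbf 1(\cdot)$ is the indicator function. *)

From HB Require Import structures.
From mathcomp Require Import all_boot all_order all_algebra.
From mathcomp Require Import all_classical all_reals all_analysis.
Set Implicit Arguments. Unset Strict Implicit. Unset Printing Implicit Defensive.
Import Order.TTheory GRing.Theory Num.Theory.
Local Open Scope ring_scope.
Local Open Scope classical_set_scope.

(* nearest integer [[x]] := floor (x + 1/2)  (ties have probability zero) *)
Definition rnd (R : realType) (x : R) : int := Num.floor (x + 2^-1).

Definition lap (R : realType) (L : nat) (a : nat -> R) (i : nat) : R :=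
  a ((i + L).-1 %% L)%N - 2 * a (i %% L)%N + a (i.+1 %% L)%N.

Definition omega (R : realType) (L : nat) (a : nat -> R) (i : nat) : R :=
  lap L a i - (rnd (lap L a i))%:~R.

Definition Ssum (R : realType) (L : nat) (a : nat -> R) : int :=
  \sum_(i < L) rnd (lap L a i).

(* the sequence [sigma(0); ...; sigma(L-1)] of indices sorted by increasing
   omega (ties, which have probability zero, broken by index) *)
Definition sigma_seq (R : realType) (L : nat) (a : nat -> R) : seq nat :=
  sort (fun i j => (omega L a i < omega L a j)
                   || ((omega L a i == omega L a j) && (i <= j)%N))
       (iota 0 L).

Definition Jp (R : realType) (L : nat) (a : nat -> R) (i : nat) : int :=
  let S := Ssum L a in
  let s := sigma_seq L a in
  if S < 0 then - ((i \in drop (L - absz S) s) : nat)%:Z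
  else if S == 0 then 0
  else ((i \in take (absz S) s) : nat)%:Z.

Definition dval (R : realType) (L : nat) (a : nat -> R) : int :=
  ((\sum_(i < L) (i%:Z) * (rnd (lap L a i) - Jp L a i)) %% L%:Z)%Z.

(* alpha_0, ..., alpha_{L-1} are measurable, independent, each uniform
   on (-1/2, 1/2): joint law is the product of the uniform laws *)
Definition iid_uniform_half (d : measure_display) (T : measurableType d)
    (R : realType) (P : probability T R) (L : nat) (alpha : nat -> T -> R) :
    Prop :=
  (forall i, (i < L)%N -> measurable_fun setT (alpha i)) /\
  forall B : nat -> set R, (forall i, measurable (B i)) ->
    (P (\bigcap_(i in `I_L) (alpha i @^-1` B i)) =
    \prod_(i < L) (lebesgue_measure (B i `&` [set x : R | (- 2^-1 < x < 2^-1)%R])))%E.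

From HB Require Import structures.
From mathcomp Require Import all_boot all_order all_algebra.
From mathcomp Require Import all_classical all_reals all_analysis.
From mathcomp Require Import measurable_realfun.
From mathcomp Require Import zify ring lra.
Import Order.TTheory GRing.Theory Num.Theory.
Local Open Scope ring_scope.
Local Open Scope classical_set_scope.

(* Proof idea: let [tilt] send each coordinate x_j to the representative in
   [-1/2, 1/2) of x_j + j/L modulo 1. It preserves the uniform product law and
   changes every Laplacian by an integer, so it fixes omega (hence sigma). The
   roundings move by integers e_i with sum 0, so S and J' are unchanged, and
   with weighted sum congruent to 1 modulo L, so d becomes d + 1 (mod L). Hence
   the L events {d = k, omega in B} have equal probability, and they partition
   {omega in B}. *)

Section Laplacian.
Context {R : realType}.
Implicit Types y : nat -> R.

Lemma lap_add L (a b : nat -> R) i :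
  lap L (fun j => a j + b j) i = lap L a i + lap L b i.
Proof. rewrite /lap; ring. Qed.

Lemma cyc_prev_ord0 n : ((0 + n.+1).-1 %% n.+1 = n)%N.
Proof. by rewrite add0n /= modn_small. Qed.

Lemma cyc_prev_lift n (j : 'I_n) : (((lift ord0 j) + n.+1).-1 %% n.+1 = j)%N.
Proof. by rewrite /= /bump /= add0n modnDr modn_small // ltnS ltnW. Qed.

Lemma cyc_next_widen n (j : 'I_n) :
  ((widen_ord (leqnSn n) j).+1 %% n.+1 = j.+1)%N.
Proof. by rewrite /= modn_small // ltnS. Qed.

Lemma sum_cyc_prev n y :
  \sum_(i < n.+1) y ((i + n.+1).-1 %% n.+1)%N = \sum_(i < n.+1) y i.
Proof.
rewrite big_ord_recl /= cyc_prev_ord0 [RHS]big_ord_recr /= addrC; congr (_ + _).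
by apply: eq_bigr => j _; rewrite cyc_prev_lift.
Qed.

Lemma sum_cyc_next n y :
  \sum_(i < n.+1) y (i.+1 %% n.+1)%N = \sum_(i < n.+1) y i.
Proof.
rewrite big_ord_recr /= modnn [RHS]big_ord_recl /= addrC; congr (_ + _).
by apply: eq_bigr => j _; rewrite cyc_next_widen.
Qed.

Lemma sum_lap n y : \sum_(i < n.+1) lap n.+1 y i = 0.
Proof.
rewrite /lap big_split /= big_split /= sum_cyc_prev sum_cyc_next sumrN.
have -> : \sum_(i < n.+1) 2 * y (i %% n.+1)%N = 2 * \sum_(i < n.+1) y i.
  by rewrite mulr_sumr; apply: eq_bigr => i _; rewrite modn_small.
ring.
Qed.

Lemma weighted_sum_lap n y :
  \sum_(i < n.+1) i%:R * lap n.+1 y i = n.+1%:R * (y 0%N - y n).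
Proof.
rewrite /lap (eq_bigr (fun i : 'I_n.+1 => i%:R * y ((i + n.+1).-1 %% n.+1)%N
   - 2 * (i%:R * y i) + i%:R * y (i.+1 %% n.+1)%N)); last first.
  by move=> i _; rewrite (modn_small (ltn_ord i)); ring.
rewrite !big_split /= sumrN -mulr_sumr.
have -> : \sum_(i < n.+1) i%:R * y ((i + n.+1).-1 %% n.+1)%N =
    \sum_(j < n) j%:R * y j + \sum_(j < n) y j.
  rewrite big_ord_recl /= mul0r add0r -big_split /=.
  apply: eq_bigr => j _.
  by rewrite cyc_prev_lift /= /bump /= add1n -addn1 natrD; ring.
have -> : \sum_(i < n.+1) i%:R * y (i.+1 %% n.+1)%N =
    \sum_(j < n) j.+1%:R * y j.+1 - \sum_(j < n) y j.+1 + n%:R * y 0%N.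
  rewrite big_ord_recr /= modnn; congr (_ + _).
  rewrite -sumrB; apply: eq_bigr => j _.
  by rewrite cyc_next_widen /= -addn1 natrD; ring.
have -> : 2 * \sum_(i < n.+1) i%:R * y i =
    (\sum_(j < n) j%:R * y j + n%:R * y n) + \sum_(j < n) j.+1%:R * y j.+1.
  have e1 : \sum_(i < n.+1) i%:R * y i = \sum_(j < n) j%:R * y j + n%:R * y n.
    by rewrite big_ord_recr.
  have e2 : \sum_(i < n.+1) i%:R * y i = \sum_(j < n) j.+1%:R * y j.+1.
    by rewrite big_ord_recl /= mul0r add0r.
  by rewrite -e1 -e2; ring.
have hcyc : \sum_(j < n) y j + y n = y 0%N + \sum_(j < n) y j.+1.
  transitivity (\sum_(j < n.+1) y j); first by rewrite big_ord_recr.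
  by rewrite big_ord_recl.
have -> : \sum_(j < n) y j = y 0%N + \sum_(j < n) y j.+1 - y n.
  by rewrite -hcyc addrK.
rewrite -addn1 natrD; ring.
Qed.

End Laplacian.

Definition Jp_of (L : nat) (r : nat -> int) (le : rel nat) (i : nat) : int :=
  let S := \sum_(i < L) r i in
  let s := sort le (iota 0 L) in
  if S < 0 then - ((i \in drop (L - absz S) s) : nat)%:Z
  else if S == 0 then 0
  else ((i \in take (absz S) s) : nat)%:Z.

Definition dval_of (L : nat) (r : nat -> int) (le : rel nat) : int :=
  ((\sum_(i < L) (i%:Z) * (r i - Jp_of L r le i)) %% L%:Z)%Z.

Definition omega_le {R : realType} (L : nat) (a : nat -> R) : rel nat :=
  fun i j => (omega L a i < omega L a j)
             || ((omega L a i == omega L a j) && (i <= j)%N).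

Lemma dvalE (R : realType) L (a : nat -> R) :
  dval L a = dval_of L (fun i => rnd (lap L a i)) (omega_le L a).
Proof. by []. Qed.

Lemma sort_iota_congr L (le le' : rel nat) :
  {in gtn L &, le =2 le'} -> sort le (iota 0 L) = sort le' (iota 0 L).
Proof.
move=> h; rewrite -val_enum_ord sort_map [RHS]sort_map.
have -> : relpre val le = relpre val le' :> rel 'I_L.
  by apply/funext => i; apply/funext => j; apply: h; rewrite inE ltn_ord.
by [].
Qed.

Lemma dval_of_congr L r r' le le' :
  {in gtn L, r =1 r'} -> {in gtn L &, le =2 le'} ->
  dval_of L r le = dval_of L r' le'.
Proof.
move=> hr hle; rewrite /dval_of /Jp_of (@sort_iota_congr L _ _ hle).
have hrI (i : 'I_L) : r i = r' i by apply: hr; rewrite inE ltn_ord.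
rewrite (eq_bigr _ (fun i _ => hrI i)).
by congr (_ %% _)%Z; apply: eq_bigr => i _; rewrite hrI.
Qed.

(* J' depends on the roundings only through their sum S. *)
Lemma dval_of_succ L r r' e le (t : int) :
  {in gtn L, forall i, r' i = r i + e i} ->
  \sum_(i < L) e i = 0 ->
  \sum_(i < L) (i%:Z) * e i = 1 + L%:Z * t ->
  dval_of L r' le = ((dval_of L r le + 1) %% L%:Z)%Z.
Proof.
move=> hr he hie.
have hrI (i : 'I_L) : r' i = r i + e i by apply: hr; rewrite inE ltn_ord.
have hJ i : Jp_of L r' le i = Jp_of L r le i.
  by rewrite /Jp_of (eq_bigr _ (fun i _ => hrI i)) big_split /= he addr0.
rewrite /dval_of modzDml.
rewrite (eq_bigr (fun i : 'I_L => i%:Z * (r i - Jp_of L r le i) + i%:Z * e i)).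
  by rewrite big_split /= hie -[RHS](modzMDl t); congr (_ %% _)%Z; ring.
by move=> i _; rewrite hJ hrI; ring.
Qed.

Lemma measurableT_preimage {d d'} {T : measurableType d} {U : measurableType d'}
    {f : T -> U} {B : set U} :
  measurable_fun setT f -> measurable B -> measurable (f @^-1` B).
Proof. by move=> mf mB; rewrite -[_ @^-1` _]setTI; apply: mf. Qed.

Section LebesgueWrap.
Variable R : realType.
Local Notation leb := (@lebesgue_measure R).

Lemma measurable_shift_preimage (a : R) (A : set R) :
  measurable A -> measurable (shift a @^-1` A).
Proof.
apply: measurableT_preimage; apply: measurable_funD => //; exact: measurable_cst.
Qed.

Definition translated_lebesgue (a : R) (A : set (measurableTypeR R)) : \bar R :=
  leb (shift a @^-1` A).

Section TranslatedLebesgue.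
Variable a : R.

Let translated_lebesgue0 : translated_lebesgue a set0 = 0%E.
Proof. by rewrite /translated_lebesgue preimage_set0 measure0. Qed.

Let translated_lebesgue_ge0 A : (0 <= translated_lebesgue a A)%E.
Proof. exact: measure_ge0. Qed.

Let translated_lebesgue_sigma_additive :
  semi_sigma_additive (translated_lebesgue a).
Proof.
move=> F mF tF mUF; rewrite /translated_lebesgue preimage_bigcup.
apply: measure_semi_sigma_additive.
- by move=> n; exact: measurable_shift_preimage (mF n).
- apply/trivIsetP => /= i j _ _ ij; rewrite -preimage_setI.
  by move/trivIsetP : tF => /(_ _ _ _ _ ij) ->//; rewrite preimage_set0.
- by rewrite -preimage_bigcup; exact: measurable_shift_preimage mUF.
Qed.

HB.instance Definition _ := isMeasure.Build _ _ _ (translated_lebesgue a)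
  translated_lebesgue0 translated_lebesgue_ge0 translated_lebesgue_sigma_additive.

End TranslatedLebesgue.

Lemma lebesgue_measure_shift a (A : set R) :
  measurable A -> leb (shift a @^-1` A) = leb A.
Proof.
move=> mA; symmetry.
apply: (@lebesgue_measure_unique R (translated_lebesgue a)) => //.
move=> X /ocitvP [->|[x x12 ->]]; first by rewrite !measure0.
change (leb `]x.1, x.2] = leb (shift a @^-1` `]x.1, x.2])).
have -> : shift a @^-1` `]x.1, x.2] = `](x.1 - a), (x.2 - a)]%classic.
  by apply/seteqP; split => y /=; rewrite !in_itv /= => /andP[h1 h2];
    apply/andP; split; lra.
rewrite !lebesgue_measure_itv /= !lte_fin x12 ltrD2r x12.
by rewrite -!EFinB; congr (_%:E); ring.
Qed.

Definition Ioo_half : set R := [set x : R | - 2^-1 < x < 2^-1].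
Definition Ico_half : set R := [set x : R | - 2^-1 <= x < 2^-1].

Lemma measurable_Ioo_half : measurable Ioo_half.
Proof.
rewrite (_ : Ioo_half = `](- 2^-1), 2^-1[%classic); first exact: measurable_itv.
by apply/seteqP; split => y; rewrite /Ioo_half /= in_itv.
Qed.

Lemma lebesgue_measureI_Ioo_Ico_half (B : set R) :
  measurable B -> leb (B `&` Ioo_half) = leb (B `&` Ico_half).
Proof.
move=> mB.
have -> : B `&` Ico_half = (B `&` Ioo_half) `|` (B `&` [set - 2^-1]).
  apply/seteqP; split => y; rewrite /Ioo_half /Ico_half /=.
    move=> [By /andP[h1 h2]]; rewrite le_eqVlt in h1.
    by case/orP: h1 => [/eqP h|h]; [right|left; split => //; apply/andP].
  case=> [[By h]|[By yE]]; split => //; [move/andP: h => [h1 h2]|rewrite yE];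
    apply/andP; split; lra.
rewrite measureU //; last first.
- by apply/seteqP; split => y //= [[_ /andP[h1 _]] [_ h]]; lra.
- exact: measurableI.
- exact: measurableI measurable_Ioo_half.
rewrite [X in (_ + X)%E](_ : _ = 0%E) ?adde0 //.
apply/eqP; rewrite eq_le measure_ge0 andbT -(lebesgue_measure_set1 (- 2^-1)).
exact: measureIr.
Qed.

(* Rotation by c of the circle R/Z, with fundamental domain [-1/2, 1/2). *)
Definition wrap (c y : R) : R := if y + c < 2^-1 then y + c else y + c - 1.

Lemma measurable_wrap_preimage c (B : set R) :
  measurable B -> measurable (wrap c @^-1` B).
Proof.
move=> mB.
have -> : wrap c @^-1` B =
    (shift c @^-1` `]-oo, 2^-1[ `&` shift c @^-1` B) `|`
    (~` (shift c @^-1` `]-oo, 2^-1[) `&` shift (c - 1) @^-1` B).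
  apply/seteqP; split => y; rewrite /wrap /= in_itv /=.
    by case: ifP => h Bh; [left|right; rewrite addrA].
  case=> [[h Bh]|[/negP/negbTE h Bh]]; first by rewrite h.
  by rewrite h -addrA.
apply: measurableU; apply: measurableI; try exact: measurable_shift_preimage.
by apply: measurableC; exact: measurable_shift_preimage.
Qed.

Lemma wrap_preimageI_Ico_half c (B : set R) : 0 <= c <= 1 ->
  wrap c @^-1` B `&` Ico_half =
  shift c @^-1` (B `&` [set z | c - 2^-1 <= z < 2^-1]) `|`
  shift (c - 1) @^-1` (B `&` [set z | - 2^-1 <= z < c - 2^-1]).
Proof.
move=> /andP[c0 c1]; apply/seteqP; split => y; rewrite /wrap /Ico_half /=.
  case: ifP => h [By /andP[h1 h2]].
    by left; split => //; apply/andP; split; lra.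
  move/negbT: h; rewrite -leNgt => h.
  by right; split; [rewrite addrA|apply/andP; split; lra].
case=> [[By /andP[h1 h2]]|[By /andP[h1 h2]]].
  by rewrite h2; split => //; apply/andP; split; lra.
have -> : (y + c < 2^-1) = false by apply/negbTE; rewrite -leNgt; lra.
by split; [rewrite -addrA|apply/andP; split; lra].
Qed.

Lemma lebesgue_measure_wrap c (B : set R) : 0 <= c <= 1 -> measurable B ->
  leb (wrap c @^-1` B `&` Ioo_half) = leb (B `&` Ioo_half).
Proof.
move=> c01 mB.
pose J1 : set R := [set z | c - 2^-1 <= z < 2^-1].
pose J2 : set R := [set z | - 2^-1 <= z < c - 2^-1].
have mJ1 : measurable J1.
  rewrite (_ : J1 = `[(c - 2^-1), 2^-1[%classic); first exact: measurable_itv.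
  by apply/seteqP; split => y; rewrite /J1 /= in_itv.
have mJ2 : measurable J2.
  rewrite (_ : J2 = `[(- 2^-1), (c - 2^-1)[%classic); first exact: measurable_itv.
  by apply/seteqP; split => y; rewrite /J2 /= in_itv.
have disjJ : (B `&` J1) `&` (B `&` J2) = set0.
  by apply/seteqP; split => y //= [[_ /andP[h1 h2]] [_ /andP[h3 h4]]]; lra.
rewrite lebesgue_measureI_Ioo_Ico_half; last exact: measurable_wrap_preimage.
rewrite lebesgue_measureI_Ioo_Ico_half // wrap_preimageI_Ico_half //.
rewrite measureU; first last.
- by apply/seteqP; split => y //= [[_ /andP[h1 h2]] [_ /andP[h3 h4]]]; lra.
- by apply: measurable_shift_preimage; exact: measurableI.
- by apply: measurable_shift_preimage; exact: measurableI.
transitivity (leb (B `&` J1) + leb (B `&` J2))%E.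
  by congr (_ + _)%E; apply: lebesgue_measure_shift; exact: measurableI.
have -> : B `&` Ico_half = (B `&` J1) `|` (B `&` J2).
  apply/seteqP; split => y; rewrite /J1 /J2 /Ico_half /=; last first.
    by case=> [][By /andP[h1 h2]]; split => //; apply/andP; split; lra.
  move=> [By /andP[h1 h2]].
  by case: (lerP (c - 2^-1) y) => h; [left|right]; split => //; apply/andP.
by rewrite measureU //; try exact: measurableI; exact: disjJ.
Qed.

End LebesgueWrap.
Arguments wrap {R}.
Arguments Ioo_half {R}.
Arguments Ico_half {R}.

Lemma rnd_add_int (R : realType) (z : R) (k : int) : rnd (z + k%:~R) = rnd z + k.
Proof.
rewrite /rnd; apply: floor_def.
have /andP[h1 h2] := floor_itv (z + 2^-1).
by rewrite !intrD in h2 *; apply/andP; split; lra.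
Qed.

(* [nat -> R] has no pointed instance, which [g_sigma_algebraType] requires. *)
Definition realseq (R : realType) := nat -> R.
HB.instance Definition _ (R : realType) := gen_eqMixin (realseq R).
HB.instance Definition _ (R : realType) := gen_choiceMixin (realseq R).
HB.instance Definition _ (R : realType) :=
  isPointed.Build (realseq R) (fun _ => 0).

Section Tilt.
Context {R : realType} {n : nat}.
Local Notation L := n.+1.
Implicit Types x : nat -> R.

Definition step (j : nat) : R := j%:R / L%:R.

Definition carry x (j : nat) : int := if x j + step j < 2^-1 then 0 else 1.

Definition tilt x : nat -> R := fun j => wrap (step j) (x j).

Definition tilt_offset x (j : nat) : R := step j - (carry x j)%:~R.

Lemma tiltE x : tilt x = fun j => x j + tilt_offset x j.
Proof.
apply/funext => j; rewrite /tilt /wrap /tilt_offset /carry.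
by case: ifP => _ /=; rewrite ?mulr0z; ring.
Qed.

Definition prev_index (i : nat) := ((i + L).-1 %% L)%N.
Definition next_index (i : nat) := (i.+1 %% L)%N.

Lemma prev_add_next_index_mod i :
  ((prev_index i + next_index i) %% L = (2 * (i %% L)) %% L)%N.
Proof.
rewrite /prev_index /next_index modnDm modnMmr.
have -> : ((i + L).-1 + i.+1 = L + 2 * i)%N by rewrite addnS /=; lia.
by rewrite modnDl.
Qed.

Definition lap_jump x (i : nat) : int :=
  (((prev_index i + next_index i) %/ L)%N%:Z - ((2 * (i %% L)) %/ L)%N%:Z)
  - (carry x (prev_index i) - 2 * carry x (i %% L) + carry x (next_index i)).

Lemma lap_tilt_offset x i : lap L (tilt_offset x) i = (lap_jump x i)%:~R.
Proof.
rewrite /lap /tilt_offset /lap_jump /step -/(prev_index i) -/(next_index i).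
set p := prev_index i; set q := next_index i; set m := (i %% L)%N.
have hL : L%:R != 0 :> R by rewrite pnatr_eq0.
have hpq : (p%:R + q%:R - 2 * m%:R : R) =
    L%:R * (((p + q) %/ L)%N%:R - ((2 * m) %/ L)%N%:R).
  rewrite -natrD -[2 * _]natrM.
  have -> : (p + q)%N%:R = ((p + q) %/ L * L + (2 * m) %% L)%N%:R :> R.
    by rewrite {1}(divn_eq (p + q) L) prev_add_next_index_mod.
  by rewrite [X in _ - X%:R](divn_eq (2 * m) L) !natrD !natrM; ring.
have hq : (((p + q) %/ L)%N%:R - ((2 * m) %/ L)%N%:R : R) =
    (p%:R + q%:R - 2 * m%:R) / L%:R by rewrite hpq; field.
rewrite !rmorphB /= !rmorphD /= intrN intrM -!pmulrn hq; field.
by rewrite -natr1 addrC in hL.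
Qed.

Lemma lap_tilt x i : lap L (tilt x) i = lap L x i + (lap_jump x i)%:~R.
Proof. by rewrite tiltE lap_add lap_tilt_offset. Qed.

Lemma omega_tilt x i : omega L (tilt x) i = omega L x i.
Proof. by rewrite /omega lap_tilt rnd_add_int intrD; ring. Qed.

Lemma omega_le_tilt x : omega_le L (tilt x) = omega_le L x.
Proof.
by apply/funext => i; apply/funext => j; rewrite /omega_le !omega_tilt.
Qed.

Lemma sum_lap_jump x : \sum_(i < L) lap_jump x i = 0.
Proof.
apply: (@intr_inj R); rewrite raddf_sum /=.
under eq_bigr do rewrite -lap_tilt_offset.
exact: sum_lap.
Qed.

(* By [weighted_sum_lap] the sum is L (w_0 - w_(L-1)) for the offsets
   w_j = j/L - carry_j, and L (0 - (L-1)/L) = 1 - L. *)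
Lemma weighted_sum_lap_jump x : \sum_(i < L) (i%:Z) * lap_jump x i =
  1 + L%:Z * (carry x n - carry x 0%N - 1).
Proof.
apply: (@intr_inj R); rewrite raddf_sum /=.
rewrite (eq_bigr (fun i : 'I_L => i%:R * lap L (tilt_offset x) i)); last first.
  by move=> i _; rewrite intrM lap_tilt_offset -pmulrn.
rewrite weighted_sum_lap /tilt_offset /step !intrD !intrM -!pmulrn !intrD !intrN.
have hL : L%:R != 0 :> R by rewrite pnatr_eq0.
by rewrite mul0r; field; rewrite -natr1 addrC in hL.
Qed.

Lemma dval_tilt x : dval L (tilt x) = ((dval L x + 1) %% L%:Z)%Z.
Proof.
rewrite !dvalE omega_le_tilt.
apply: (@dval_of_succ L _ _ (lap_jump x) _ (carry x n - carry x 0%N - 1)).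
- by move=> i _; rewrite lap_tilt rnd_add_int.
- exact: sum_lap_jump.
- exact: weighted_sum_lap_jump.
Qed.

Lemma dval_ge0_lt x : 0 <= dval L x < L%:Z.
Proof. by rewrite /dval modz_ge0 //= ltz_pmod. Qed.

Lemma dval_tilt_succ x k : (k.+1 < L)%N ->
  (dval L (tilt x) = k.+1%:Z) <-> (dval L x = k%:Z).
Proof.
move=> kL; rewrite dval_tilt; have := dval_ge0_lt x.
set u := dval L x => /andP[u0 uL]; split.
  have [h|h] := ltrP (u + 1) L%:Z.
    by rewrite modz_small; [lia|apply/andP; split; lia].
  have -> : u + 1 = L%:Z by lia.
  by rewrite modzz; lia.
by move=> ->; rewrite modz_small; [lia|apply/andP; split; lia].
Qed.

Lemma step_ge0_le1 j : (j < L)%N -> 0 <= step j <= 1.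
Proof.
move=> jL; rewrite /step divr_ge0 //= ler_pdivrMr ?ltr0n // mul1r ler_nat.
exact: ltnW.
Qed.

Definition cylinder (B : nat -> set R) : set (realseq R) :=
  \bigcap_(i in `I_L) ((fun x => x i) @^-1` B i).

Definition cylinders : set (set (realseq R)) :=
  [set A | exists B : nat -> set R,
    (forall i, measurable (B i)) /\ A = cylinder B].

Local Notation U := (g_sigma_algebraType cylinders).

Lemma cylinderT : cylinder (fun _ => setT) = setT.
Proof. by apply/seteqP; split => x. Qed.

Lemma setI_closed_cylinders : setI_closed cylinders.
Proof.
move=> _ _ [B [mB ->]] [C [mC ->]]; exists (fun i => B i `&` C i); split.
  by move=> i; apply: measurableI.
apply/seteqP; split => x /=.
  by move=> [h1 h2] i iL; split; [exact: h1|exact: h2].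
by move=> h; split => i iL; have [] := h i iL.
Qed.

Lemma measurable_coord j : (j < L)%N -> measurable_fun setT (fun x : U => x j).
Proof.
move=> jL _ Y mY; rewrite setTI; apply: sub_sigma_algebra.
exists (fun i => if i == j then Y else setT); split.
  by move=> i; case: eqP.
apply/seteqP; split => x /=.
  by move=> Yx i _ /=; case: eqP => [->|].
by move=> h; have := h j jL; rewrite /= eqxx.
Qed.

Lemma measurable_lap i : measurable_fun setT (fun x : U => lap L x i).
Proof.
have mx k : measurable_fun setT (fun x : U => x (k %% L)%N).
  by apply: measurable_coord; rewrite ltn_pmod.
apply: measurable_funD; last exact: mx.
by apply: measurable_funB; [exact: mx|apply: measurable_funM].
Qed.

Lemma measurable_rnd_lap_eq i (k : int) :
  measurable [set x : U | rnd (lap L x i) = k].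
Proof.
rewrite (_ : [set x : U | _] = (fun x : U => lap L x i) @^-1`
   `[(k%:~R - 2^-1), (k%:~R + 2^-1)[%classic); last first.
  apply/seteqP; split => x /=; rewrite in_itv /=.
    move=> h; have := floor_itv (lap L x i + 2^-1); rewrite /rnd in h.
    by rewrite h intrD => /andP[h1 h2]; apply/andP; split; lra.
  move=> /andP[h1 h2]; rewrite /rnd; apply: floor_def; rewrite intrD.
  by apply/andP; split; lra.
exact: measurableT_preimage (measurable_lap i) (measurable_itv _).
Qed.

Lemma measurable_omega_preimage i (B : set R) : measurable B ->
  measurable ((fun x : U => omega L x i) @^-1` B).
Proof.
move=> mB.
rewrite (_ : _ @^-1` B = \bigcup_(k : int) ([set x : U | rnd (lap L x i) = k] `&`
   (fun x : U => lap L x i - k%:~R) @^-1` B)); last first.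
  apply/seteqP; split => x /=; first by exists (rnd (lap L x i)).
  by move=> [k _ [hk h]]; rewrite /omega hk.
apply: countable_bigcupT_measurable; first exact: countableP.
move=> k; apply: measurableI; first exact: measurable_rnd_lap_eq.
apply: measurableT_preimage mB.
by apply: measurable_funB; [exact: measurable_lap|exact: measurable_cst].
Qed.

Definition omega_event (B : nat -> set R) : set U :=
  \bigcap_(i in `I_L) ((fun x : U => omega L x i) @^-1` B i).

Lemma measurable_omega_event B : (forall i, measurable (B i)) ->
  measurable (omega_event B).
Proof.
move=> mB; apply: bigcap_measurableType => i _.
exact: measurable_omega_preimage.
Qed.

(* d depends on x only through the roundings of the Laplacians and the table
   of comparisons between the omegas: finitely many integers and booleans.
   Splitting along these countably many data gives measurability of d. *)
Definition lap_data := ({ffun 'I_L -> int} * {ffun 'I_L * 'I_L -> bool})%type.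

Definition lap_sub (v : {ffun 'I_L -> int}) (x : U) (i : 'I_L) : R :=
  lap L x i - (v i)%:~R.

Definition lap_sub_le v x (i j : 'I_L) : bool :=
  (lap_sub v x i < lap_sub v x j)
  || ((lap_sub v x i == lap_sub v x j) && (i <= j)%N).

Definition data_fiber (vp : lap_data) : set U := [set x : U |
  (forall i : 'I_L, rnd (lap L x i) = vp.1 i) /\
  (forall i j : 'I_L, lap_sub_le vp.1 x i j = vp.2 (i, j))].

Definition data_dval (vp : lap_data) : int :=
  dval_of L (fun i => vp.1 (inord i)) (fun i j => vp.2 (inord i, inord j)).

Lemma dval_data_fiber {vp : lap_data} {x : U} :
  data_fiber vp x -> dval L x = data_dval vp.
Proof.
move=> [h1 h2]; rewrite dvalE /data_dval; apply: dval_of_congr => [i|i j].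
  by rewrite inE => iL; rewrite -h1 inordK.
by rewrite !inE => iL jL; rewrite -h2 /lap_sub_le /lap_sub -!h1 !inordK.
Qed.

Lemma dval_eq_bigcup_fibers (k : int) : [set x : U | dval L x = k] =
  \bigcup_(vp : lap_data) (if data_dval vp == k then data_fiber vp else set0).
Proof.
apply/seteqP; split => x /=; last first.
  by move=> [vp _]; case: eqP => // <-; exact: dval_data_fiber.
move=> hx.
pose v : {ffun 'I_L -> int} := [ffun i : 'I_L => rnd (lap L x i)].
pose p : {ffun 'I_L * 'I_L -> bool} :=
  [ffun ij : 'I_L * 'I_L => omega_le L x ij.1 ij.2].
have hF : data_fiber (v, p) x.
  by split => [i|i j] /=; rewrite !ffunE // /lap_sub_le /lap_sub !ffunE.
by exists (v, p) => //; rewrite -(dval_data_fiber hF) hx eqxx.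
Qed.

Lemma measurable_data_fiber vp : measurable (data_fiber vp).
Proof.
rewrite (_ : data_fiber vp =
    (\bigcap_(i in [set: 'I_L]) [set x : U | rnd (lap L x i) = vp.1 i]) `&`
    (\bigcap_(ij in [set: 'I_L * 'I_L])
       ((fun x : U => lap_sub_le vp.1 x ij.1 ij.2) @^-1` [set vp.2 ij]))).
  apply: measurableI; apply: fin_bigcap_measurable; try exact: finite_finset.
    by move=> i _; exact: measurable_rnd_lap_eq.
  move=> [i j] _; apply: measurableT_preimage => //=.
  have msub l : measurable_fun setT (lap_sub vp.1 ^~ l).
    by apply: measurable_funB; [exact: measurable_lap|exact: measurable_cst].
  apply: measurable_or; first exact: measurable_fun_ltr.
  by apply: measurable_and; [exact: measurable_fun_eqr|exact: measurable_cst].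
apply/seteqP; split => x /=.
  by move=> [h1 h2]; split => [i _|[i j] _]; [exact: h1|exact: h2].
by move=> [h1 h2]; split => [i|i j]; [exact: h1|exact: (h2 (i, j))].
Qed.

Lemma measurable_dval_eq (k : int) : measurable [set x : U | dval L x = k].
Proof.
rewrite dval_eq_bigcup_fibers; apply: countable_bigcupT_measurable.
  exact: countableP.
by move=> vp; case: eqP => _; [exact: measurable_data_fiber|exact: measurable0].
Qed.

Definition dval_omega_event (B : nat -> set R) (k : nat) : set U :=
  [set x : U | dval L x = k%:Z] `&` omega_event B.

Lemma measurable_dval_omega_event B k : (forall i, measurable (B i)) ->
  measurable (dval_omega_event B k).
Proof.
move=> mB; apply: measurableI; first exact: measurable_dval_eq.
exact: measurable_omega_event.
Qed.

Lemma omega_event_partition B :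
  omega_event B = \big[setU/set0]_(k < L) dval_omega_event B k.
Proof.
rewrite -bigcup_mkord; apply/seteqP; split => x /=; last by move=> [k _ []].
move=> hB; have /andP[h0 hL] := dval_ge0_lt x.
exists `|dval L x|%N; first by rewrite /= -ltz_nat gez0_abs.
by split => //=; rewrite gez0_abs.
Qed.

Lemma tilt_preimage_cylinder B :
  tilt @^-1` cylinder B = cylinder (fun i => wrap (step i) @^-1` B i).
Proof. by apply/seteqP; split => x. Qed.

Lemma measurable_tilt : measurable_fun setT (tilt : U -> U).
Proof.
apply: (@measurability _ _ U U setT tilt cylinders) => //.
move=> _ [_ [B [mB ->]] <-]; rewrite setTI tilt_preimage_cylinder.
by apply: sub_sigma_algebra; exists (fun i => wrap (step i) @^-1` B i); split;
  last by []; move=> i; exact: measurable_wrap_preimage.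
Qed.

Definition tiltU : U -> U := tilt.
HB.instance Definition _ := isMeasurableFun.Build _ _ U U tiltU measurable_tilt.

Lemma tilt_preimage_dval_omega_event B k : (k.+1 < L)%N ->
  tilt @^-1` dval_omega_event B k.+1 = dval_omega_event B k.
Proof.
move=> kL; apply/seteqP; split => x /=.
  move=> [h1 h2]; split; first exact/(dval_tilt_succ x _ kL).
  by move=> i iL; have := h2 i iL; rewrite /= omega_tilt.
move=> [h1 h2]; split; first exact/(dval_tilt_succ x _ kL).
by move=> i iL; rewrite /= omega_tilt; exact: h2.
Qed.

Section Law.
Context {d : measure_display} {T : measurableType d} {P : probability T R}.
Context {alpha : nat -> T -> R}.
Hypothesis alpha_iid : iid_uniform_half P L alpha.

Definition sample : T -> U := fun t j => alpha j t.

Lemma measurable_sample : measurable_fun setT sample.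
Proof.
apply: (@measurability _ _ T U setT sample cylinders) => //.
move=> _ [_ [B [mB ->]] <-]; rewrite setTI.
apply: bigcap_measurableType => i iL.
exact: measurableT_preimage (alpha_iid.1 i iL) (mB i).
Qed.

HB.instance Definition _ :=
  isMeasurableFun.Build _ _ T U sample measurable_sample.

Definition law := distribution P sample.

Lemma law_cylinder B : (forall i, measurable (B i)) ->
  law (cylinder B) = (\prod_(i < L) lebesgue_measure (B i `&` Ioo_half))%E.
Proof. exact: alpha_iid.2. Qed.

Lemma law_tilt_cylinder B : (forall i, measurable (B i)) ->
  distribution law tiltU (cylinder B) =
  (\prod_(i < L) lebesgue_measure (B i `&` Ioo_half))%E.
Proof.
move=> mB; rewrite /distribution /pushforward /tiltU tilt_preimage_cylinder.
transitivity (\prod_(i < L)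
    lebesgue_measure (wrap (step i) @^-1` B i `&` Ioo_half))%E.
  by apply: law_cylinder => i; exact: measurable_wrap_preimage.
apply: eq_bigr => i _; apply: lebesgue_measure_wrap => //.
exact: step_ge0_le1.
Qed.

(* Both laws agree on the intersection-stable generating family [cylinders]. *)
Lemma law_tilt E : measurable E -> law E = distribution law tiltU E.
Proof.
move=> mE.
apply: (@g_sigma_algebra_measure_unique _ R U cylinders _ (fun _ => setT)) => //.
- by move=> A GA; apply: sub_sigma_algebra.
- by move=> _; rewrite -cylinderT; exists (fun _ => setT).
- by apply/seteqP; split => x // _; exists 0%N.
- exact: setI_closed_cylinders.
- move=> _ [B [mB ->]].
  transitivity (\prod_(i < L) lebesgue_measure (B i `&` Ioo_half))%E.
    exact: law_cylinder.
  by symmetry; exact: law_tilt_cylinder.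
- move=> _; change (P (sample @^-1` setT) < +oo)%E.
  by rewrite preimage_setT probability_setT ltry.
Qed.

Lemma law_dval_omega_event_const B k : (forall i, measurable (B i)) ->
  (k < L)%N -> law (dval_omega_event B k) = law (dval_omega_event B 0).
Proof.
move=> mB; elim: k => [//|k IH] kL.
rewrite -IH; last exact: ltnW.
rewrite law_tilt; last exact: measurable_dval_omega_event.
by rewrite /distribution /pushforward /tiltU tilt_preimage_dval_omega_event.
Qed.

Lemma law_dval_omega_event B k : (forall i, measurable (B i)) -> (k < L)%N ->
  law (dval_omega_event B k) = (((L%:R : R)^-1)%:E * law (omega_event B))%E.
Proof.
move=> mB kL.
have -> : law (omega_event B) = (\sum_(i < L) law (dval_omega_event B i))%E.
  rewrite omega_event_partition; apply: measure_semi_additive_ord_I.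
  - by move=> i _; exact: measurable_dval_omega_event.
  - by move=> i j _ _ [x [[h1 _] [h2 _]]]; move: h1 h2 => /= -> [].
  - by apply: bigsetU_measurable => i _; exact: measurable_dval_omega_event.
have sum_cst (x : \bar R) m : (\sum_(i < m) x)%E = ((m%:R)%:E * x)%E.
  elim: m => [|m IHm]; first by rewrite big_ord0 mul0e.
  by rewrite big_ord_recr /= IHm -natr1 EFinD ge0_muleDl ?lee_fin // mul1e.
rewrite (eq_bigr (fun _ => law (dval_omega_event B 0))); last first.
  by move=> i _; exact: law_dval_omega_event_const.
rewrite sum_cst muleA -EFinM mulVf ?pnatr_eq0 // mul1e.
exact: law_dval_omega_event_const.
Qed.

End Law.
End Tilt.

Theorem lemma3 (d : measure_display) (T : measurableType d) (R : realType)
    (P : probability T R) (L : nat) (alpha : nat -> T -> R) :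
  (0 < L)%N ->
  iid_uniform_half P L alpha ->
  forall k : nat, (k < L)%N ->
  forall B : nat -> set R, (forall i, measurable (B i)) ->
  P ([set t | dval L (fun j => alpha j t) = k%:Z] `&`
     \bigcap_(i in `I_L) ((fun t => omega L (fun j => alpha j t) i) @^-1` B i))
  = (((L%:R : R)^-1)%:E *
    P (\bigcap_(i in `I_L) ((fun t => omega L (fun j => alpha j t) i) @^-1` B i)))%E.
Proof.
case: L alpha => [//|n] alpha _ alpha_iid k kL B mB.
exact: law_dval_omega_event alpha_iid _ _ mB kL.
Qed.
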